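(* Assume the law of excluded middle. Let $\alpha\in\mathrm{ord}$ with $\alpha\neq_{\mathrm{Ord}}\underline 0$. Then either there exists $\beta\in\mathrm{ord}$ with $\alpha=_{\mathrm{Ord}}\mathrm{succ}(\beta)$, or $\alpha$ is the supremum (least upper bound for $\le$) of the ordinals $\gamma\in\mathrm{ord}$ with $\gamma<\alpha$.
   Context: Let $\mathfrak F$ be a set of index sets such that: $\mathbb N$ and each $\mathbb N_k=\{n\in\mathbb N:n<k\}$ ($k\ge 0$) belong to $\mathfrak F$; every finitely enumerated subset of an element of $\mathfrak F$ is isomorphic to an element of $\mathfrak F$; for $J\in\mathfrak F$ the set of finitely enumerated subsets of $J$ is isomorphic to an element of $\mathfrak F$; $\mathfrak F$ is stable under disjoint unions indexed by elements of $\mathfrak F$. A finitely enumerated subset of $A$ is one given by a map $\mathbb N_k\to A$; write $F\subseteq_f I$. The set $\mathrm{ord}$ is inductively generated by $\underline 0$ and, for every family $(\alpha_i)_{i\in I}$ with $I\in\mathfrak F$, $\alpha_i\in\mathrm{ord}$, an element $\mathrm S(\alpha_i)_{i\in I}$; for such $\alpha$, $I_\alpha=I$ and $\alpha_i$ are its definitional subordinals; $I_{\underline 0}=\emptyset$. $\mathrm{succ}(\beta)$ is $\mathrm S$ of the one-element family $(\beta)$. For a finite list $F$ in $I_\alpha$, $\alpha_F$ is the list of the $\alpha_i$, $i\in F$. Relations between an element and a nonempty finite list, by simultaneous induction: $\alpha\le\beta^1,\dots,\beta^m$ means $\alpha_i<\beta^1,\dots,\beta^m$ for all $i\in I_\alpha$;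 $\alpha<\beta^1,\dots,\beta^m$ means there exist $F_1\subseteq_f I_{\beta^1},\dots,F_m\subseteq_f I_{\beta^m}$, not all empty, with $\alpha\le\beta^1_{F_1},\dots,\beta^m_{F_m}$ (concatenated list). $\alpha=_{\mathrm{Ord}}\beta$ means $\alpha\le\beta$ and $\beta\le\alpha$. *)

From mathcomp Require Import all_boot.
Set Implicit Arguments. Unset Strict Implicit. Unset Printing Implicit Defensive.

(* The set of index sets 𝔉 is modelled as a universe of codes [C : Type]
   with decoding [El : C -> Type]. *)

Definition iso (A B : Type) : Prop :=
  exists (f : A -> B) (g : B -> A), cancel f g /\ cancel g f.

Definition index_family (C : Type) (El : C -> Type)
    (cnat : C) (cfin : nat -> C) : Prop :=
  [/\ iso (El cnat) nat,
      (forall k, iso (El (cfin k)) 'I_k),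
      (forall (c : C) (k : nat) (e : 'I_k -> El c),
          exists c' : C, iso (El c') {x : El c | exists i : 'I_k, e i = x}),
      (* the set of finitely enumerated subsets (enumerations N_k -> J,
         i.e. finite lists) of J ∈ 𝔉 is isomorphic to an element of 𝔉 *)
      (forall c : C, exists c' : C, iso (El c') (seq (El c)))
    &
      (forall (c : C) (d : El c -> C),
          exists c' : C, iso (El c') {i : El c & El (d i)})].

Section Ord.
Variables (C : Type) (El : C -> Type).

Inductive ord : Type :=
  | O0 : ord
  | OS : forall c : C, (El c -> ord) -> ord.

(* [fsub b s]: s is the list b_F of definitional subordinals of b indexed by
   some finitely enumerated subset F ⊆_f I_b. *)
Definition fsub (b : ord) (s : seq ord) : Prop :=
  match b with
  | O0 => s = [::]
  | OS c f => exists F : seq (El c), s = map f F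
  end.

Fixpoint fsubs (L : seq ord) (ss : seq (seq ord)) : Prop :=
  match L, ss with
  | [::], [::] => True
  | b :: L', s :: ss' => fsub b s /\ fsubs L' ss'
  | _, _ => False
  end.

(* α ≤ β^1,...,β^m : every α_i < β^1,...,β^m, where
   γ < β^1,...,β^m : there are F_j ⊆_f I_{β^j}, not all empty, with
   γ ≤ β^1_{F_1},...,β^m_{F_m} (concatenated). *)
Fixpoint ole (a : ord) (L : seq ord) {struct a} : Prop :=
  match a with
  | O0 => True
  | OS c f => forall i : El c,
      exists ss : seq (seq ord),
        [/\ fsubs L ss, flatten ss <> [::] & ole (f i) (flatten ss)]
  end.

Definition olt (a : ord) (L : seq ord) : Prop :=
  exists ss : seq (seq ord),
    [/\ fsubs L ss, flatten ss <> [::] & ole a (flatten ss)].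

Definition oeq (a b : ord) : Prop := ole a [:: b] /\ ole b [:: a].

End Ord.

Arguments O0 {C El}.
Arguments OS {C El} c _.

From mathcomp Require Import all_boot.
From Stdlib Require List.
Set Implicit Arguments. Unset Strict Implicit.

(* Both ≤ and < are monotone under enlarging the list on the right and
   transitive, and with excluded middle any two ordinals are comparable:
   α ≤ β or β < α.  Every γ < α satisfies γ ≤ α, so α always bounds its
   predecessors.  If it is not their least upper bound, some upper bound δ
   fails α ≤ δ; then α = S(α_i)_{i ∈ I} with some α_i ≮ δ, so δ ≤ α_i by
   comparability, every α_j ≤ δ ≤ α_i, and α =_Ord succ(α_i). *)

Section OrdinalOrder.
Variables (C : Type) (El : C -> Type).
Implicit Types (a b d x y : ord El) (L M m : seq (ord El)).

Definition subord y b : Prop := if b is OS c f then exists i, f i = y else False.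

Definition subords L y : Prop := exists2 b, List.In b L & subord y b.

Lemma incl_nonnil T (s t : seq T) : List.incl s t -> s <> [::] -> t <> [::].
Proof. by move=> st s_ne t0; apply: s_ne; apply: List.incl_l_nil; rewrite -t0. Qed.

Lemma fsubs_subords L ss y : fsubs L ss -> List.In y (flatten ss) -> subords L y.
Proof.
elim: L ss => [|b L IH] [|s ss] //= [bs Lss] /List.in_app_iff[ys|yss].
- case: b bs => [/= s0|c f /= [F sF]]; subst s; first by case: ys.
  by case/List.in_map_iff: ys => i [fi _]; exists (OS c f); [left | exists i].
- by case: (IH _ Lss yss) => b' b'L yb'; exists b'; [right|].
Qed.

Lemma fsubs_nil L : exists2 ss, fsubs L ss & flatten ss = [::].
Proof.
elim: L => [|b L [ss Lss ss0]]; first by exists [::].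
by exists ([::] :: ss) => //=; split=> //; case: b => //= c f; exists [::].
Qed.

Lemma fsubs_add L ss y : fsubs L ss -> subords L y ->
  exists2 ss', fsubs L ss' & List.incl (y :: flatten ss) (flatten ss').
Proof.
elim: L ss => [|b L IH] [|s ss] //=; first by move=> _ [].
move=> [bs Lss] [b' /= [<-{b'}|b'L] yb].
- case: b bs yb => [//|c f [F ->] [i <-]].
  by exists (map f (i :: F) :: ss) => //=; split=> //; exists (i :: F).
- have [|ss' Lss' sub] := IH ss Lss; first by exists b'.
  exists (s :: ss') => // z /= [<-|/List.in_app_iff[zs|zss]]; apply/List.in_app_iff.
  + by right; apply: sub; left.
  + by left.
  + by right; apply: sub; right.
Qed.

Lemma fsubs_cover L m : (forall y, List.In y m -> subords L y) ->
  exists2 ss, fsubs L ss & List.incl m (flatten ss).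
Proof.
elim: m => [|y m IH] mL; first by have [ss Lss _] := fsubs_nil L; exists ss.
have [z zm|ss Lss sub] := IH; first by apply: mL; right.
have [ss' Lss' sub'] := fsubs_add Lss (mL y (or_introl erefl)).
by exists ss' => // z /= [<-|zm]; apply: sub'; [left | right; apply: sub].
Qed.

Lemma ole_incl a L L' : ole a L -> List.incl L L' -> ole a L'.
Proof.
elim: a L L' => [//|c f IH] L L' /= aL LL' i.
have [ss [Lss ss_ne fi_ss]] := aL i.
have [ss' L'ss' sub] : exists2 ss', fsubs L' ss' & List.incl (flatten ss) (flatten ss').
  apply: fsubs_cover => y /(fsubs_subords Lss) [b bL yb].
  by exists b; [apply: LL'|].
by exists ss'; split; [|exact: incl_nonnil sub ss_ne|exact: IH fi_ss sub].
Qed.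

Lemma oltP a L :
  olt a L <-> exists m, [/\ m <> [::], (forall y, List.In y m -> subords L y) & ole a m].
Proof.
split=> [[ss [Lss ss_ne a_ss]]|[m [m_ne mL a_m]]].
  by exists (flatten ss); split=> // y; apply: fsubs_subords.
have [ss Lss sub] := fsubs_cover mL.
by exists ss; split; [|exact: incl_nonnil sub m_ne|exact: ole_incl a_m sub].
Qed.

Lemma olt_subords a L y : subords L y -> ole a [:: y] -> olt a L.
Proof. by move=> Ly ay; apply/oltP; exists [:: y]; split=> // z [<-|[]]. Qed.

Lemma olt_subord_ole x y M : subord y x -> ole x M -> olt y M.
Proof. by case: x => [//|c f] [i <-]; apply. Qed.

Lemma olt_join M m : (forall y, List.In y m -> olt y M) ->
  exists m', [/\ m <> [::] -> m' <> [::], (forall z, List.In z m' -> subords M z)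
               & forall y, List.In y m -> ole y m'].
Proof.
elim: m => [|y m IH] mM; first by exists [::].
have [z zm|m' [_ m'M m_m']] := IH; first by apply: mM; right.
have /oltP[my [my_ne myM y_my]] := mM y (or_introl erefl).
exists (my ++ m'); split.
- by case: my my_ne {myM y_my}.
- by move=> z /List.in_app_iff[]; [apply: myM | apply: m'M].
- move=> z /= [<-|zm].
  + by apply: ole_incl y_my _ => w w_in; apply/List.in_app_iff; left.
  + by apply: ole_incl (m_m' z zm) _ => w w_in; apply/List.in_app_iff; right.
Qed.

Lemma ole_trans a L M : ole a L -> (forall x, List.In x L -> ole x M) -> ole a M.
Proof.
elim: a L M => [//|c f IH] L M /= aL LM i.
have /oltP[m [m_ne mL fi_m]] := aL i.
have [|m' [m'_ne m'M m_m']] := olt_join (M := M) (m := m).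
  by move=> y /mL [x xL yx]; apply: olt_subord_ole yx (LM x xL).
by apply/oltP; exists m'; split; [exact: m'_ne|exact: m'M|exact: IH fi_m m_m'].
Qed.

Lemma ole_trans1 a b d : ole a [:: b] -> ole b [:: d] -> ole a [:: d].
Proof. by move=> ab bd; apply: ole_trans ab _ => x [<-|[]]. Qed.

Lemma ole_refl a : ole a [:: a].
Proof.
elim: a => [//|c f IH] i; apply: (olt_subords (y := f i)) => //.
by exists (OS c f); [left | exists i].
Qed.

Lemma olt_subord y b : subord y b -> olt y [:: b].
Proof. by move=> yb; apply: olt_subords (ole_refl y); exists b; [left|]. Qed.

Lemma ole_subord y b : subord y b -> ole y [:: b].
Proof.
elim: y b => [//|c f IH] b yb i.
by apply: (olt_subords (y := OS c f)); [exists b; [left|] | apply: IH; exists i].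
Qed.

Lemma olt_ole a L : olt a L -> ole a L.
Proof.
case/oltP=> m [_ mL a_m]; apply: ole_trans a_m _ => y /mL [b bL yb].
by apply: ole_incl (ole_subord yb) _ => z [<-|[]].
Qed.

Section Classical.
Hypothesis LEM : forall P : Prop, P \/ ~ P.

Lemma not_forall_exists T (P : T -> Prop) : ~ (forall t, P t) -> exists t, ~ P t.
Proof.
move=> not_all; have [//|not_ex] := LEM (exists t, ~ P t).
case: not_all => t; have [//|not_Pt] := LEM (P t).
by case: not_ex; exists t.
Qed.

Lemma not_imply (P Q : Prop) : ~ (P -> Q) -> P /\ ~ Q.
Proof.
move=> not_PQ; have [p|not_p] := LEM P.
  by split=> // q; apply: not_PQ.
by case: not_PQ => p; case: (not_p p).
Qed.

Lemma ole_or_olt a b : ole a [:: b] \/ olt b [:: a].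
Proof.
elim: a b => [|c f IH] b; first by left.
have [|/not_forall_exists[i not_fib]] := LEM (ole (OS c f) [:: b]); first by left.
right; apply: (olt_subords (y := f i)); first by exists (OS c f); [left | exists i].
case: b not_fib => [//|d g] not_fib j.
have [fi_gj|//] := IH i (g j).
by case: not_fib; apply: olt_subords fi_gj; exists (OS d g); [left | exists j].
Qed.

End Classical.
End OrdinalOrder.

Theorem corollary3p20 (C : Type) (El : C -> Type) (cnat : C) (cfin : nat -> C)
    (hF : index_family El cnat cfin)
    (LEM : forall P : Prop, P \/ ~ P)
    (alpha : ord El) (halpha : ~ oeq alpha O0) :
  (exists beta : ord El, oeq alpha (OS (cfin 1) (fun _ => beta)))
  \/ ((forall gamma : ord El, olt gamma [:: alpha] -> ole gamma [:: alpha])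
      /\ (forall delta : ord El,
            (forall gamma : ord El, olt gamma [:: alpha] -> ole gamma [:: delta]) ->
            ole alpha [:: delta])).
Proof.
have [least|not_least] := LEM (forall delta : ord El,
  (forall gamma, olt gamma [:: alpha] -> ole gamma [:: delta]) -> ole alpha [:: delta]).
  by right; split=> // gamma; apply: olt_ole.
have [delta not_bound] := not_forall_exists LEM not_least.
have [bound not_le] := not_imply LEM not_bound.
case: alpha halpha bound not_le {not_least not_bound} => [|c f] _ bound not_le.
  by case: not_le.
have [i0 not_lt] := not_forall_exists LEM not_le.
have delta_le : ole delta [:: f i0] by case: (ole_or_olt LEM delta (f i0)).
case: hF => _ /(_ 1)[_ [e _]] _ _ _.
left; exists (f i0); split=> [i|_]; last by apply: olt_subord; exists i0.
apply: (olt_subords (y := f i0)).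
  by exists (OS (cfin 1) (fun _ => f i0)); [left | exists (e ord0)].
by apply: ole_trans1 delta_le; apply: bound; apply: olt_subord; exists i.
Qed.
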